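(* Let $d$ be a metric on $\mathbb R^n$ induced by a norm, $\delta>0$, and let $\tilde w:\mathcal D^n(\delta)\to\mathcal D^n(\delta)$ be the $\delta$-roundoff of a contraction $w:\mathbb R^n\to\mathbb R^n$ on $(\mathbb R^n,d)$ with contractivity factor $\lambda\in[0,1)$ and fixed point $x_f$. Let $r_0=\theta(1-\lambda)^{-1}$ and $$\Lambda(x_f,r_0)=\{\tilde y\in\mathcal D^n(\delta):d(\tilde y,x_f)\le\theta(1-\lambda)^{-1}\}.$$ Then $\Lambda(x_f,r_0)$ is an absorbing set for $\tilde w$ in $\mathcal D^n(\delta)$, and $\tilde w(\Lambda(x_f,r_0))\subset\Lambda(x_f,r_0)$.
   Context: For $m\in\mathbb Z^n$, $C_\delta(m)=\prod_{j=1}^n[(m_j-\tfrac12)\delta,(m_j+\tfrac12)\delta)$; $\mathcal D^n(\delta)=\{\delta m:m\in\mathbb Z^n\}\subset\mathbb R^n$. The $\delta$-roundoff of $x\in\mathbb R^n$ is $\tilde x=\delta m$ where $x\in C_\delta(m)$; the $\delta$-roundoff of $w$ is $\tilde w(\tilde x)=\widetilde{w(\tilde x)}$. $\theta:=\tfrac12\operatorname{diam}_d(C_\delta(0))$. A set $\Lambda\subset\mathcal D^n(\delta)$ is an absorbing set for $\tilde w$ (in $\mathcal D^n(\delta)$) if for every $\tilde x\in\mathcal D^n(\delta)$ there is $N$ with $\tilde w^{\circ i}(\tilde x)\in\Lambda$ for all $i\ge N$. *)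

From mathcomp Require Import all_boot all_order all_algebra.
From mathcomp Require Import all_classical all_reals.
Set Implicit Arguments. Unset Strict Implicit. Unset Printing Implicit Defensive.
Import Order.TTheory GRing.Theory Num.Theory.
Local Open Scope ring_scope.
Local Open Scope classical_set_scope.

(* N is a norm on R^n; the metric is d(x,y) = N (x - y). *)
Definition is_norm (R : realType) (n : nat) (N : 'rV[R]_n -> R) : Prop :=
  [/\ forall x, N x = 0 -> x = 0,
      forall (a : R) x, N (a *: x) = `|a| * N x
    & forall x y, N (x + y) <= N x + N y].

Definition cell (R : realType) (n : nat) (delta : R) (m : 'rV[int]_n)
  : set 'rV[R]_n :=
  [set x | forall j : 'I_n,
     ((m ord0 j)%:~R - 2^-1) * delta <= x ord0 j /\
     x ord0 j < ((m ord0 j)%:~R + 2^-1) * delta].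

Definition grid (R : realType) (n : nat) (delta : R) : set 'rV[R]_n :=
  [set x | exists m : 'rV[int]_n, x = delta *: map_mx (fun z : int => z%:~R) m].

(* The delta-roundoff of x: delta m where x in C_delta(m);
   m_j = floor (x_j / delta + 1/2) is that (unique) m. *)
Definition roundoff (R : realType) (n : nat) (delta : R) (x : 'rV[R]_n)
  : 'rV[R]_n :=
  \row_j (delta * (Num.floor (x ord0 j / delta + 2^-1))%:~R).

Definition roundoff_map (R : realType) (n : nat) (delta : R)
  (w : 'rV[R]_n -> 'rV[R]_n) : 'rV[R]_n -> 'rV[R]_n :=
  fun x => roundoff delta (w x).

Definition theta (R : realType) (n : nat) (N : 'rV[R]_n -> R) (delta : R) : R :=
  2^-1 * sup [set r | exists (x y : 'rV[R]_n),
     [/\ cell delta (0 : 'rV[int]_n) x, cell delta (0 : 'rV[int]_n) y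
        & r = N (x - y)]].

Definition absorbing (R : realType) (n : nat) (D Lam : set 'rV[R]_n)
  (f : 'rV[R]_n -> 'rV[R]_n) : Prop :=
  forall x, D x -> exists K : nat, forall i : nat, (K <= i)%N -> Lam (iter i f x).

(* Rounding moves a point by at most theta, so
   N (w~ y - xf) <= theta + lambda N (y - xf).  Hence the ball of radius
   r0 = theta / (1 - lambda) about xf is w~-invariant, and outside it the distance
   to xf strictly decreases.  An orbit that never entered the ball would then be
   injective while staying in a bounded part of the grid, which is finite because
   N is equivalent to the sup norm. *)

From mathcomp Require Import all_boot all_order all_algebra.
From mathcomp Require Import all_classical all_reals.
From mathcomp Require Import topology normedtype derive lra zify.
Import Order.TTheory GRing.Theory Num.Theory.
Import numFieldNormedType.Exports.
Set Implicit Arguments.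
Unset Strict Implicit.
Unset Printing Implicit Defensive.

Local Open Scope ring_scope.
Local Open Scope classical_set_scope.

Lemma ler_mul01Pr (R : realFieldType) (x y : R) : 0 <= x ->
  reflect (forall r, 0 < r < 1 -> r * x <= y) (x <= y).
Proof.
move=> x0; rewrite -lee_fin.
have x0' : (0 <= x%:E)%E by rewrite lee_fin.
apply: (iffP (@lee_mul01Pr R x%:E y%:E x0')) => [rxy r /rxy|rxy r r01].
- by rewrite -EFinM lee_fin.
- by rewrite -EFinM lee_fin rxy.
Qed.

Lemma finite_set_seq_not_inj (T : Type) (A : set T) (u : nat -> T) :
  finite_set A -> (forall k, A (u k)) -> ~ injective u.
Proof.
move=> finA Au u_inj; apply: infinite_nat.
rewrite -(eq_finite_set (inj_card_eq (in2W u_inj))).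
by apply: sub_finite_set finA => _ [k _ <-].
Qed.

Section rV_norm.
Variables (R : realType) (n : nat).
Implicit Types (x : 'rV[R]_n) (m : R).

Lemma rV_coord_le_norm x j : `|x ord0 j| <= `|x|.
Proof.
rewrite [`|x|]/Num.norm /= mx_normrE.
exact: (le_bigmax _ (fun ij : 'I_1 * 'I_n => `|x ij.1 ij.2|) (ord0, j)).
Qed.

Lemma rV_norm_le x m : 0 <= m -> (forall j, `|x ord0 j| <= m) -> `|x| <= m.
Proof.
move=> m0 xm; rewrite [`|x|]/Num.norm /= mx_normrE.
by apply: bigmax_le => // -[i j] _; rewrite (ord1 i); exact: xm.
Qed.

End rV_norm.

Section is_norm.
Variables (R : realType) (n : nat) (N : 'rV[R]_n -> R).
Hypothesis N_norm : is_norm N.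
Implicit Types x y : 'rV[R]_n.

Lemma is_norm_eq0 x : N x = 0 -> x = 0.
Proof. by case: N_norm => + _ _; apply. Qed.

Lemma is_normZ a x : N (a *: x) = `|a| * N x.
Proof. by case: N_norm => _ + _; apply. Qed.

Lemma is_normD x y : N (x + y) <= N x + N y.
Proof. by case: N_norm => _ _; apply. Qed.

Lemma is_norm0 : N 0 = 0.
Proof. by rewrite -(scale0r (0 : 'rV[R]_n)) is_normZ normr0 mul0r. Qed.

Lemma is_normN x : N (- x) = N x.
Proof. by rewrite -scaleN1r is_normZ normrN normr1 mul1r. Qed.

Lemma is_normB x y : N (x - y) = N (y - x).
Proof. by rewrite -is_normN opprB. Qed.

Lemma is_norm_ge0 x : 0 <= N x.
Proof.
have := is_normD x (- x); rewrite subrr is_norm0 is_normN.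
by rewrite -mulr2n pmulrn_lge0.
Qed.

Lemma is_norm_dist_dist x y : `|N x - N y| <= N (x - y).
Proof.
have Nx : N x <= N y + N (x - y) by rewrite -{1}(subrKC y x) is_normD.
have Ny : N y <= N x + N (x - y).
  by rewrite -{1}(subrKC x y) is_normB is_normD.
by rewrite ler_norml; apply/andP; split; lra.
Qed.

Lemma is_norm_sum (I : finType) (F : I -> 'rV[R]_n) :
  N (\sum_i F i) <= \sum_i N (F i).
Proof.
elim/big_rec2: _ => [|i y1 y2 _ h]; first by rewrite is_norm0.
by apply: le_trans (is_normD _ _) _; rewrite lerD2l.
Qed.

Lemma is_norm_ub : exists2 C, 0 <= C & forall x, N x <= C * `|x|.
Proof.
exists (\sum_(j < n) N (delta_mx 0 j)).
  by apply: sumr_ge0 => j _; exact: is_norm_ge0.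
move=> x; rewrite {1}(row_sum_delta x) mulr_suml.
apply: le_trans (is_norm_sum _) _; apply: ler_sum => j _.
by rewrite is_normZ mulrC ler_wpM2l ?is_norm_ge0 ?rV_coord_le_norm.
Qed.

Lemma is_norm_continuous : continuous N.
Proof.
have [C C0 NC] := is_norm_ub.
move=> x; apply/(@cvgrPdist_le _ _ _ _ (nbhs_filter x)) => e e0.
have e'0 : 0 < e / (C + 1) by rewrite divr_gt0 // ltr_wpDl.
apply/(@nbhs_normP _ 'rV[R]_n).
exists (e / (C + 1)) => // y /= /ltW xy.
apply: le_trans (is_norm_dist_dist _ _) _; apply: le_trans (NC _) _.
move: xy; rewrite ler_pdivlMr ?ltr_wpDl // => xy.
by apply: le_trans xy; have := normr_ge0 (x - y); nra.
Qed.

(* [N] attains a positive minimum on the compact unit sphere of the sup norm. *)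
Lemma is_norm_lb : exists2 c, 0 < c & forall x, c * `|x| <= N x.
Proof.
pose S := [set x : 'rV[R]_n | `|x| = 1].
have S_normalize x : x != 0 -> S (`|x|^-1 *: x).
  by move=> x0; rewrite /S /= normrZ normfV normr_id mulVf ?normr_eq0.
have [[x1 Sx1]|S0] := pselect (S !=set0); last first.
  exists 1 => // x; have [->|x0] := eqVneq x 0; first by rewrite normr0 mulr0 is_norm0.
  by exfalso; apply: S0; exists (`|x|^-1 *: x); exact: S_normalize.
have S_compact : compact S.
  apply: bounded_closed_compact.
    by exists 1; split; [exact: num_real | move=> m m1 x /= ->; exact: ltW].
  apply: (@preimage_closed _ _ (@Num.norm _ 'rV[R]_n) [set y | y = 1]).
    by move=> y _; exact: norm_continuous.
  exact: closed_eq.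
have [c Sc minc] := EVT_min_rV (ex_intro _ x1 Sx1) S_compact
  (continuous_subspaceT is_norm_continuous).
move: Sc; rewrite inE /S /= => c1.
have Nc0 : 0 < N c.
  rewrite lt_neqAle is_norm_ge0 andbT eq_sym; apply/eqP => /is_norm_eq0 c0.
  by move: c1; rewrite c0 normr0 => /esym/eqP; rewrite oner_eq0.
exists (N c) => // x; have [->|x0] := eqVneq x 0; first by rewrite normr0 mulr0 is_norm0.
have := minc _ (mem_set (S_normalize x x0)); rewrite is_normZ normfV normr_id.
by rewrite ler_pdivlMl ?normr_gt0 // mulrC.
Qed.

End is_norm.

Section roundoff.
Variables (R : realType) (n : nat) (N : 'rV[R]_n -> R) (delta : R).
Hypotheses (N_norm : is_norm N) (delta_gt0 : 0 < delta).
Implicit Types x y : 'rV[R]_n.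

Local Notation cell0 := (cell delta (0 : 'rV[int]_n)).

Lemma cell0P x :
  cell0 x <-> forall j, - (2^-1 * delta) <= x ord0 j < 2^-1 * delta.
Proof.
rewrite /cell; split=> + j => /(_ j); rewrite mxE mulr0z sub0r add0r mulNr.
  by move=> [-> ->].
by move/andP.
Qed.

Lemma cell0_coord_le x j : cell0 x -> `|x ord0 j| <= 2^-1 * delta.
Proof.
by move/cell0P/(_ j)/andP => [? ?]; rewrite ler_norml; apply/andP; split; lra.
Qed.

Lemma coord_lt_cell0 x : (forall j, `|x ord0 j| < 2^-1 * delta) -> cell0 x.
Proof.
by move=> xd; apply/cell0P => j; have := xd j; rewrite ltr_norml => /andP[? ?]; lra.
Qed.

Lemma cell0Z a x : `|a| < 1 -> cell0 x -> cell0 (a *: x).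
Proof.
move=> a1 x0; apply: coord_lt_cell0 => j; rewrite mxE normrM.
apply: (le_lt_trans (ler_wpM2l (normr_ge0 a) (cell0_coord_le j x0))).
by rewrite gtr_pMl // mulr_gt0 // invr_gt0.
Qed.

Lemma roundoff_grid x : grid delta (roundoff delta x).
Proof.
by exists (\row_j Num.floor (x ord0 j / delta + 2^-1)); apply/rowP => j; rewrite !mxE.
Qed.

Lemma sub_roundoff_cell0 x : cell0 (x - roundoff delta x).
Proof.
apply/cell0P => j; rewrite !mxE.
set t := x ord0 j / delta + 2^-1.
have xE : x ord0 j = delta * (t - 2^-1) by rewrite /t addrK mulrC divfK ?gt_eqF.
have t_ge := floor_le t; have t_lt := floorD1_gt t; rewrite intrD in t_lt.
have frac_ge0 : 0 <= delta * (t - (Num.floor t)%:~R).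
  by rewrite mulr_ge0 ?subr_ge0 // ltW.
have frac_lt1 : 0 < delta * ((Num.floor t)%:~R + 1 - t) by rewrite mulr_gt0 ?subr_gt0.
rewrite xE; apply/andP; split; lra.
Qed.

Lemma has_sup_cell0_dist :
  has_sup [set r | exists x y, [/\ cell0 x, cell0 y & r = N (x - y)]].
Proof.
have [C C0 NC] := is_norm_ub N_norm.
split.
  have cell0_0 : cell0 0.
    by apply: coord_lt_cell0 => j; rewrite mxE normr0 mulr_gt0 ?invr_gt0.
  by exists (N (0 - 0)), 0, 0.
exists (C * delta); move=> _ [x [y [x0 y0 ->]]].
apply: le_trans (NC _) _; rewrite ler_wpM2l // rV_norm_le ?ltW // => j.
rewrite !mxE; apply: le_trans (ler_normB _ _) _.
by have := cell0_coord_le j x0; have := cell0_coord_le j y0; lra.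
Qed.

(* [-x] need not lie in the half-open cell, so we compare [r x] with [-(r x)]
   for [0 < r < 1]. *)
Lemma cell0_le_theta x : cell0 x -> N x <= theta N delta.
Proof.
move=> x0; suff : 2 * N x <= 2 * theta N delta by rewrite ler_pM2l.
rewrite /theta mulrA divff ?pnatr_eq0 // mul1r.
apply/ler_mul01Pr => [|r /andP[r_gt0 r_lt1]]; first by rewrite mulr_ge0 ?is_norm_ge0.
apply: sup_upper_bound; first exact: has_sup_cell0_dist.
have r1 : `|r| < 1 by rewrite gtr0_norm.
exists (r *: x), ((- r) *: x); split.
- exact: cell0Z.
- by apply: cell0Z; rewrite ?normrN.
- rewrite (_ : _ - _ = (r + r) *: x); last by rewrite scaleNr opprK scalerDl.
  rewrite is_normZ // gtr0_norm ?addr_gt0 //; lra.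
Qed.

Lemma roundoff_dist_le_theta x : N (x - roundoff delta x) <= theta N delta.
Proof. exact/cell0_le_theta/sub_roundoff_cell0. Qed.

(* A grid point [delta m] with [|m_j| < C] is decoded from the finite row [m + C]. *)
Lemma finite_grid_norm_le (M : R) :
  finite_set [set y : 'rV[R]_n | grid delta y /\ `|y| <= M].
Proof.
pose C := (Num.trunc (M / delta)).+1.
pose decode (v : 'rV['I_(2 * C).+1]_n) : 'rV[R]_n :=
  delta *: map_mx (fun i : 'I_(2 * C).+1 => ((i : nat)%:Z - C%:Z)%:~R) v.
apply: sub_finite_set (finite_image decode (@finite_finset _ setT)).
move=> _ [[m ->] yM].
have m_lt j : `|m ord0 j| < C%:Z.
  rewrite -(ltr_int R) intr_norm; apply: le_lt_trans (truncnS_gt (M / delta)).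
  rewrite ler_pdivlMr // mulrC -(gtr0_norm delta_gt0) -normrM.
  apply: le_trans yM.
  by have := rV_coord_le_norm (delta *: map_mx intr m) j; rewrite !mxE.
exists (\row_j inord (absz (m ord0 j + C%:Z))) => //; apply/rowP => j.
have := m_lt j; rewrite !mxE; set z := m ord0 j; change (m 0 j) with z => z_lt.
by rewrite inordK ?gez0_abs ?addrK //; lia.
Qed.

Lemma finite_grid_is_norm_le x0 r :
  finite_set [set y | grid delta y /\ N (y - x0) <= r].
Proof.
have [c c_gt0 cN] := is_norm_lb N_norm.
apply: sub_finite_set (finite_grid_norm_le (r / c + `|x0|)) => y [gy Nyr].
split=> //; rewrite -(subrK x0 y); apply: le_trans (ler_normD _ _) _.
by rewrite lerD2r ler_pdivlMr // mulrC (le_trans (cN _)).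
Qed.

End roundoff.

Section roundoff_contraction.
Variables (R : realType) (n : nat) (N : 'rV[R]_n -> R) (delta lambda : R).
Variables (w : 'rV[R]_n -> 'rV[R]_n) (xf : 'rV[R]_n).
Hypotheses (N_norm : is_norm N) (delta_gt0 : 0 < delta).
Hypotheses (lambda_ge0 : 0 <= lambda) (lambda_lt1 : lambda < 1).
Hypothesis w_contraction : forall x y, N (w x - w y) <= lambda * N (x - y).
Hypothesis w_xf : w xf = xf.

Local Notation wr := (roundoff_map delta w).
Local Notation r0 := (theta N delta / (1 - lambda)).

Lemma roundoff_map_dist_le y :
  N (wr y - xf) <= theta N delta + lambda * N (y - xf).
Proof.
have -> : wr y - xf = (wr y - w y) + (w y - w xf) by rewrite w_xf addrA subrK.
apply: le_trans (is_normD N_norm _ _) _; apply: lerD; last exact: w_contraction.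
by rewrite (is_normB N_norm) roundoff_dist_le_theta.
Qed.

Lemma roundoff_map_dist_sub_le y :
  N (wr y - xf) - N (y - xf) <= (1 - lambda) * (r0 - N (y - xf)).
Proof.
have := roundoff_map_dist_le y; set r := r0.
have -> : theta N delta = (1 - lambda) * r by rewrite mulrC divfK // subr_eq0 gt_eqF.
lra.
Qed.

Lemma roundoff_map_ball y : N (y - xf) <= r0 -> N (wr y - xf) <= r0.
Proof.
move=> y_r0; have : 0 <= lambda * (r0 - N (y - xf)) by rewrite mulr_ge0 ?subr_ge0.
by have := roundoff_map_dist_sub_le y; lra.
Qed.

Lemma roundoff_map_dist_lt y : r0 < N (y - xf) -> N (wr y - xf) < N (y - xf).
Proof.
move=> y_r0; have : 0 < (1 - lambda) * (N (y - xf) - r0) by rewrite mulr_gt0 ?subr_gt0.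
by have := roundoff_map_dist_sub_le y; lra.
Qed.

Lemma iter_roundoff_map_ball k y : N (y - xf) <= r0 -> N (iter k wr y - xf) <= r0.
Proof. by move=> y_r0; elim: k => [|k IHk] //=; exact: roundoff_map_ball. Qed.

Lemma iter_roundoff_map_grid k x : grid delta x -> grid delta (iter k wr x).
Proof. by case: k => [|k] //= _; exact: roundoff_grid. Qed.

Lemma roundoff_map_enters_ball x : grid delta x ->
  exists k, N (iter k wr x - xf) <= r0.
Proof.
move=> gx; apply: contrapT => /forallNP never.
have far k : r0 < N (iter k wr x - xf) by rewrite ltNge; apply/negP/never.
have decr : {homo (fun k => N (iter k wr x - xf)) : i j /~ (i < j)%O}.
  apply: Order.NatMonotonyTheory.nhomo_ltn_lt => k.
  exact: roundoff_map_dist_lt (far k).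
have := finite_grid_is_norm_le N_norm delta_gt0 xf (N (x - xf)).
move/(finite_set_seq_not_inj (u := fun k => iter k wr x)); apply.
  move=> k; split; first exact: iter_roundoff_map_grid.
  case: k => [|k]; first exact: lexx.
  by have /ltW := decr k.+1 0%N isT.
by move=> i j orbit_ij; case: (ltngtP i j) => // /decr; rewrite /= orbit_ij ltxx.
Qed.

End roundoff_contraction.

Theorem theorem5 (R : realType) (n : nat) (N : 'rV[R]_n -> R)
  (delta lambda : R) (w : 'rV[R]_n -> 'rV[R]_n) (xf : 'rV[R]_n) :
  is_norm N -> 0 < delta ->
  0 <= lambda -> lambda < 1 ->
  (forall x y, N (w x - w y) <= lambda * N (x - y)) ->
  w xf = xf ->
  let Lam := [set y | grid delta y /\
                 N (y - xf) <= theta N delta / (1 - lambda)] in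
  absorbing (grid delta) Lam (roundoff_map delta w) /\
  roundoff_map delta w @` Lam `<=` Lam.
Proof.
move=> N_norm delta_gt0 lambda_ge0 lambda_lt1 w_contraction w_xf Lam.
have ball :=
  iter_roundoff_map_ball N_norm delta_gt0 lambda_ge0 lambda_lt1 w_contraction w_xf.
split=> [x gx|_ [y [gy y_r0] <-]].
  have [K xK] :=
    roundoff_map_enters_ball N_norm delta_gt0 lambda_lt1 w_contraction w_xf gx.
  exists K => i Ki; split; first exact: iter_roundoff_map_grid.
  by rewrite -(subnK Ki) iterD; exact: ball.
by split; [exact: roundoff_grid | exact: (ball 1%N)].
Qed.
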